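(* Consider the mining game with $N\ge 2$ miners, costs-per-hash $0<c_1\le\dots\le c_N$, reward $R>0$ and capacity parameter $\gamma\ge0$. The number of active miners in the unique equilibrium hash rate profile is the largest integer $n$ with $2\le n\le N$ such that $$c_n<\frac{c^{(n)}+R\gamma/c_n}{n-1},\qquad c^{(n)}=\sum_{i=1}^n c_i.$$ This number $n$ is (weakly) increasing in $R$ and in $\gamma$.
   Context: Mining game: $N\ge2$ miners with costs-per-hash $0<c_1\le\dots\le c_N$; each miner $i$ chooses $h_i\ge0$, $H=\sum_j h_j$, and the payoff of miner $i$ is $\frac{h_i}{H}R-c_ih_i-\frac{\gamma}{2}h_i^2$ if $H>0$, and $0$ if $H=0$. An equilibrium hash rate profile is a pure-strategy Nash equilibrium $h^*\in[0,\infty)^N$; it exists and is unique. Miner $i$ is active if $h_i^*>0$. *)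

From HB Require Import structures.
From mathcomp Require Import all_boot all_order all_algebra.
From mathcomp Require Import reals.
Set Implicit Arguments. Unset Strict Implicit. Unset Printing Implicit Defensive.
Import Order.TTheory GRing.Theory Num.Theory.
Local Open Scope ring_scope.

(* Miners are indexed 1..N; costs c : nat -> R, hash profile h : nat -> R
   (only the values at indices 1..N are relevant). r is the reward R,
   g is the capacity parameter gamma. *)

Section Mining.
Variable R : realType.

Definition total_hash (N : nat) (h : nat -> R) : R := \sum_(1 <= j < N.+1) h j.

Definition payoff (N : nat) (c : nat -> R) (r g : R) (h : nat -> R) (i : nat) : R :=
  let H := total_hash N h in
  if 0 < H then h i / H * r - c i * h i - g / 2 * h i ^+ 2 else 0.

Definition deviate (h : nat -> R) (i : nat) (x : R) : nat -> R :=
  fun j => if j == i then x else h j.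

Definition is_equilibrium (N : nat) (c : nat -> R) (r g : R) (h : nat -> R) : Prop :=
  (forall i, (1 <= i <= N)%N -> 0 <= h i) /\
  (forall i, (1 <= i <= N)%N -> forall x : R, 0 <= x ->
      payoff N c r g (deviate h i x) i <= payoff N c r g h i).

Definition num_active (N : nat) (h : nat -> R) : nat :=
  count (fun i => 0 < h i) (iota 1 N).

Definition cum_cost (c : nat -> R) (n : nat) : R := \sum_(1 <= i < n.+1) c i.

Definition active_cond (c : nat -> R) (r g : R) (n : nat) : bool :=
  c n < (cum_cost c n + r * g / c n) / (n%:R - 1).

Definition n_active (N : nat) (c : nat -> R) (r g : R) : nat :=
  (\max_(2 <= n < N.+1 | active_cond c r g n) n)%N.

End Mining.

From HB Require Import structures.
From mathcomp Require Import all_boot all_order all_algebra.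
From mathcomp Require Import reals ring lra zify.
Set Implicit Arguments. Unset Strict Implicit. Unset Printing Implicit Defensive.
Import Order.TTheory GRing.Theory Num.Theory.
Local Open Scope ring_scope.

(* In an equilibrium the total hash rate H is positive, and perturbing a
   miner's hash rate yields the first-order conditions
   R (H - h_i) = H^2 (c_i + gamma h_i) for active miners and R <= H c_i for
   inactive ones. With the price p = R / H, miner i is thus active iff
   c_i < p, so the active miners are 1..k for sorted costs, and summing
   h_i (gamma H + p) = H (p - c_i) over them gives (k - 1) p = c^(k) + gamma H.
   The condition at n reads c_n^2 (n - 1) < c_n c^(n) + R gamma, and by that
   identity c_n^2 (k - 1) - c_n c^(k) - R gamma = (c_n - p) ((k - 1) c_n + gamma H):
   this is negative for n = k, and for n > k, where c_n >= p and
   c^(n) <= c^(k) + (n - k) c_n, the condition fails. Monotonicity holds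
   because the condition depends on R and gamma only through R gamma. *)

Section RealFacts.
Variable R : realFieldType.

Lemma le0_of_le_small (phi A B : R) : 0 <= A -> 0 <= B ->
  (forall t : R, 0 < t < 1 -> phi <= t * (A + B * t)) -> phi <= 0.
Proof.
move=> A_ge0 B_ge0 small; rewrite leNgt; apply/negP => phi_gt0.
have D_gt0 : 0 < A + B + 2 * phi by lra.
pose t := phi / (A + B + 2 * phi).
have tD : t * (A + B + 2 * phi) = phi by rewrite mulfVK ?gt_eqF.
have t_gt0 : 0 < t by rewrite divr_gt0.
have t_lt1 : t < 1 by nra.
have := small t; rewrite t_gt0 t_lt1 => /(_ isT); nra.
Qed.

Lemma price_factor (K C G p x : R) : (K - 1) * p = C + G ->
  x * (x * (K - 1)) - x * C - p * G = (x - p) * ((K - 1) * x + G).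
Proof.
move=> E; have -> : G = (K - 1) * p - C by rewrite E; ring.
by ring.
Qed.

End RealFacts.

Lemma count_down_closed (P : pred nat) (N : nat) :
  (forall i j, (1 <= i)%N -> (i <= j)%N -> (j <= N)%N -> P j -> P i) ->
  forall i, (1 <= i <= N)%N -> P i = (i <= count P (iota 1 N))%N.
Proof.
move=> down i /andP[i1 iN].
have -> : iota 1 N = iota 1 i.-1 ++ iota i (N - i.-1).
  by rewrite {1}(_ : N = i.-1 + (N - i.-1))%N ?iotaD ?add1n ?prednK //; lia.
rewrite count_cat; case Pi: (P i).
- have allP : count P (iota 1 i.-1) = i.-1.
    rewrite -[RHS](size_iota 1); apply/eqP; rewrite -all_count; apply/allP => j.
    by rewrite mem_iota => jr; apply: (down j i) => //; lia.
  by rewrite allP (_ : N - i.-1 = (N - i).+1)%N /= ?Pi; lia.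
- have noneP : count P (iota i (N - i.-1)) = 0%N.
    apply/eqP; rewrite -leqn0 leqNgt -has_count; apply/hasP => -[j].
    rewrite mem_iota => jr Pj; move: Pi; rewrite (down i j) //; lia.
  rewrite noneP addn0; apply/esym/negbTE; rewrite -ltnNge.
  by rewrite (leq_ltn_trans (count_size _ _)) ?size_iota //; lia.
Qed.

Section TotalHash.
Variables (R : realType) (N : nat) (h : nat -> R).

Lemma total_hash_deviate i (x : R) : (1 <= i <= N)%N ->
  total_hash N (deviate h i x) = total_hash N h - h i + x.
Proof.
move=> iN; have iNs : i \in index_iota 1 N.+1 by rewrite mem_index_iota ltnS.
rewrite /total_hash !(bigD1_seq i iNs (iota_uniq _ _)) /= /deviate eqxx.
under eq_bigr => j /negbTE -> do [].
by rewrite [h i + _]addrC addrK addrC.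
Qed.

Lemma num_active_le : (num_active N h <= N)%N.
Proof. by rewrite (leq_trans (count_size _ _)) ?size_iota. Qed.

Hypothesis h_ge0 : forall i, (1 <= i <= N)%N -> 0 <= h i.

Lemma total_hash_sub_ge0 i : (1 <= i <= N)%N -> 0 <= total_hash N h - h i.
Proof.
move=> iN; have iNs : i \in index_iota 1 N.+1 by rewrite mem_index_iota ltnS.
rewrite /total_hash (bigD1_seq i iNs (iota_uniq _ _)) /= [h i + _]addrC addrK.
by rewrite big_seq_cond sumr_ge0 // => j /andP[]; rewrite mem_index_iota ltnS => /h_ge0.
Qed.

End TotalHash.

Section ActiveCondition.
Variables (R : realType) (N : nat) (c : nat -> R).

Lemma active_condE (r g : R) n : (2 <= n)%N -> 0 < c n ->
  active_cond c r g n = (c n * (c n * (n%:R - 1)) < c n * cum_cost c n + r * g).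
Proof.
move=> n_ge2 cn_gt0.
rewrite /active_cond ltr_pdivlMr ?subr_gt0 ?ltr1n // -(ltr_pM2l cn_gt0) [X in _ < X]mulrDr.
by rewrite [c n * (r * g / c n)]mulrC divfK ?gt_eqF.
Qed.

Lemma active_cond_le (r g r' g' : R) n : (2 <= n)%N -> 0 < c n -> r * g <= r' * g' ->
  active_cond c r g n -> active_cond c r' g' n.
Proof.
move=> n_ge2 cn_gt0 rg_le; rewrite !active_condE // => /lt_le_trans -> //.
by rewrite lerD2l.
Qed.

Lemma n_active_le (r g r' g' : R) :
  (forall n, (2 <= n <= N)%N -> active_cond c r g n -> active_cond c r' g' n) ->
  (n_active N c r g <= n_active N c r' g')%N.
Proof.
move=> cond_le; apply/bigmax_leqP_seq => n; rewrite mem_index_iota ltnS => nN Pn.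
by apply: leq_bigmax_seq; [rewrite mem_index_iota ltnS | apply: cond_le].
Qed.

Lemma n_active_eq (r g : R) k : (2 <= k <= N)%N -> active_cond c r g k ->
  (forall n, (k < n <= N)%N -> ~~ active_cond c r g n) -> n_active N c r g = k.
Proof.
move=> kN Pk notP; apply/eqP; rewrite eqn_leq; apply/andP; split.
- apply/bigmax_leqP_seq => n; rewrite mem_index_iota ltnS => /andP[_ nN] Pn.
  by rewrite leqNgt; apply: contraL Pn => kn; apply: notP; rewrite kn.
- by apply: leq_bigmax_seq; rewrite ?mem_index_iota ?ltnS.
Qed.

Lemma cum_cost_le k n : (k <= n)%N -> (forall i, (k < i <= n)%N -> c i <= c n) ->
  cum_cost c n <= cum_cost c k + (n - k)%:R * c n.
Proof.
move=> kn c_le; rewrite /cum_cost (@big_cat_nat _ _ _ k.+1) //= ?ltnS // lerD2l.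
rewrite mulr_natl -[(n - k)%N]/(n.+1 - k.+1)%N -sumr_const_nat.
by apply: ler_sum_nat => i /andP[ki iN]; apply: c_le; rewrite ki -ltnS.
Qed.

End ActiveCondition.

Section Equilibrium.
Variables (R : realType) (N : nat) (c : nat -> R) (r g : R) (h : nat -> R).
Hypotheses (eq_h : is_equilibrium N c r g h) (N_gt0 : (0 < N)%N).
Hypotheses (c_gt0 : forall i, (1 <= i <= N)%N -> 0 < c i) (r_gt0 : 0 < r) (g_ge0 : 0 <= g).

Local Notation H := (total_hash N h).

Lemma equilibrium_total_hash_gt0 : 0 < H.
Proof.
have [h_ge0 h_best] := eq_h; have iN : (1 <= 1 <= N)%N by rewrite leqnn N_gt0.
have := total_hash_sub_ge0 h_ge0 iN; have := h_ge0 _ iN.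
case: (ltP 0 H) => // H_le0 h1_ge0 S_ge0.
suff : r <= 0 by rewrite leNgt r_gt0.
apply: (le0_of_le_small (A := c 1%N) (B := g / 2)); [exact/ltW/c_gt0 | by rewrite divr_ge0 |].
move=> t /andP[t_gt0 _]; have := h_best _ iN t (ltW t_gt0).
rewrite /payoff total_hash_deviate // /deviate eqxx.
have -> : H - h 1%N + t = t by lra.
rewrite t_gt0 ltNge H_le0 /= divff ?gt_eqF // mul1r.
lra.
Qed.

(* The left-hand side is [(H - h i + x) * H] times the gain of miner [i]
   from deviating to [x]. *)
Lemma equilibrium_deviation i (x : R) : (1 <= i <= N)%N -> 0 < x ->
  (x - h i) * (r * (H - h i) - (H - h i + x) * H * (c i + g * (x + h i) / 2)) <= 0.
Proof.
move=> iN x_gt0; have [h_ge0 h_best] := eq_h; have H_gt0 := equilibrium_total_hash_gt0.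
have Sx_gt0 : 0 < H - h i + x by have := total_hash_sub_ge0 h_ge0 iN; lra.
have := h_best i iN x (ltW x_gt0).
rewrite /payoff total_hash_deviate // /deviate eqxx Sx_gt0 H_gt0 -subr_ge0 => gain.
have -> : (x - h i) * (r * (H - h i) - (H - h i + x) * H * (c i + g * (x + h i) / 2))
  = - ((H - h i + x) * H) * (h i / H * r - c i * h i - g / 2 * h i ^+ 2 -
       (x / (H - h i + x) * r - c i * x - g / 2 * x ^+ 2)).
  by field; rewrite !gt_eqF.
by rewrite mulNr oppr_le0 mulr_ge0 // mulr_ge0 // ltW.
Qed.

Lemma equilibrium_inactive i : (1 <= i <= N)%N -> h i = 0 -> r <= H * c i.
Proof.
move=> iN hi0; rewrite -subr_le0.
have H_gt0 := equilibrium_total_hash_gt0; have ci_gt0 := c_gt0 iN.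
apply: (le0_of_le_small (A := c i + g * H / 2) (B := g / 2)).
- by have := mulr_ge0 g_ge0 (ltW H_gt0); lra.
- by rewrite divr_ge0.
move=> t /andP[t_gt0 _]; have := equilibrium_deviation iN t_gt0.
rewrite hi0 !subr0 addr0 pmulr_rle0 //.
have -> : r * H - (H + t) * H * (c i + g * t / 2) =
  H * (r - H * c i - t * (c i + g * H / 2 + g / 2 * t)) by ring.
by rewrite pmulr_rle0 // subr_le0.
Qed.

Lemma equilibrium_active i : (1 <= i <= N)%N -> 0 < h i ->
  r * (H - h i) = H ^+ 2 * (c i + g * h i).
Proof.
move=> iN hi_gt0; apply/eqP; rewrite -subr_eq0 eq_le.
have H_gt0 := equilibrium_total_hash_gt0; have ci_gt0 := c_gt0 iN.
set a := h i in hi_gt0 *; set A := H * (c i + g * a) + H ^+ 2 * g / 2.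
have A_ge0 : 0 <= A.
  have := mulr_ge0 g_ge0 (ltW hi_gt0); have := mulr_ge0 (sqr_ge0 H) g_ge0.
  rewrite /A; nra.
(* Deviations to [a + t] and to [a - a * t] give the two inequalities. *)
apply/andP; split.
- apply: (le0_of_le_small (B := H * g / 2) A_ge0).
    by rewrite divr_ge0 // mulr_ge0 // ltW.
  move=> t /andP[t_gt0 _].
  have := equilibrium_deviation (x := a + t) iN (addr_gt0 hi_gt0 t_gt0).
  rewrite -/a (addrC a) addrK pmulr_rle0 //.
  have -> : r * (H - a) - (H - a + (t + a)) * H * (c i + g * (t + a + a) / 2) =
    r * (H - a) - H ^+ 2 * (c i + g * a) - t * (A + H * g / 2 * t).
    by rewrite /A; field.
  by rewrite subr_le0.
- rewrite -oppr_le0.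
  apply: (le0_of_le_small (A := a * A) _ (lexx 0)).
    exact: mulr_ge0 (ltW hi_gt0) A_ge0.
  move=> t /andP[t_gt0 t_lt1].
  have x_gt0 : 0 < a - a * t by rewrite subr_gt0 gtr_pMr.
  have := equilibrium_deviation iN x_gt0.
  have -> : a - a * t - a = - (a * t) by ring.
  rewrite -/a mulNr oppr_le0 pmulr_rge0 ?mulr_gt0 //.
  have -> : r * (H - a) - (H - a + (a - a * t)) * H * (c i + g * (a - a * t + a) / 2) =
    r * (H - a) - H ^+ 2 * (c i + g * a) + a * t * A - (a * t) ^+ 2 * (H * g / 2).
    by rewrite /A; field.
  have : 0 <= (a * t) ^+ 2 * (H * g / 2).
    by rewrite mulr_ge0 ?sqr_ge0 // divr_ge0 // mulr_ge0 // ltW.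
  rewrite mul0r addr0; lra.
Qed.

Local Notation p := (r / H).

Lemma equilibrium_activeE i : (1 <= i <= N)%N -> (0 < h i) = (c i < p).
Proof.
move=> iN; have H_gt0 := equilibrium_total_hash_gt0.
rewrite ltr_pdivlMr // mulrC; case: ltrP => [hi_gt0 | hi_le0].
- have := equilibrium_active iN hi_gt0; have := mulr_gt0 r_gt0 hi_gt0.
  have := mulr_ge0 (mulr_ge0 (sqr_ge0 H) g_ge0) (ltW hi_gt0).
  move=> *; apply/esym; nra.
- have hi0 : h i = 0 by apply/le_anti; rewrite hi_le0 eq_h.1.
  by rewrite ltNge equilibrium_inactive.
Qed.

Lemma equilibrium_hash_rate i : (1 <= i <= N)%N ->
  h i * (g * H + p) = if c i < p then H * (p - c i) else 0.
Proof.
move=> iN; have H_gt0 := equilibrium_total_hash_gt0.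
rewrite -equilibrium_activeE //; case: ltrP => [hi_gt0 | hi_le0].
- have -> : h i * (g * H + p) =
    H * (p - c i) - (r * (H - h i) - H ^+ 2 * (c i + g * h i)) / H.
    by field; rewrite gt_eqF.
  by rewrite equilibrium_active // subrr mul0r subr0.
- by rewrite (@le_anti _ _ (h i) 0) ?hi_le0 ?eq_h.1 ?mul0r.
Qed.

Hypothesis c_le : forall i j, (1 <= i)%N -> (i <= j)%N -> (j <= N)%N -> c i <= c j.

Lemma equilibrium_active_prefix i : (1 <= i <= N)%N ->
  (c i < p) = (i <= num_active N h)%N.
Proof.
move=> iN; rewrite (@count_down_closed (fun j => c j < p) N) //.
- congr (_ <= _)%N; apply: eq_in_count => j; rewrite mem_iota => jN.
  by rewrite equilibrium_activeE //; move: jN; rewrite addnC addn1 ltnS.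
- by move=> j k j1 jk kN; apply: le_lt_trans; apply: c_le.
Qed.

Lemma equilibrium_price :
  ((num_active N h)%:R - 1) * p = cum_cost c (num_active N h) + g * H.
Proof.
have H_gt0 := equilibrium_total_hash_gt0; set k := num_active N h.
have kN : (k <= N)%N := num_active_le N h.
have total : H * (g * H + p) = H * (k%:R * p - cum_cost c k).
  rewrite [LHS]mulr_suml.
  transitivity (\sum_(1 <= i < N.+1) if (i <= k)%N then H * (p - c i) else 0).
    apply: eq_big_nat => i; rewrite ltnS => iN.
    by rewrite equilibrium_hash_rate // equilibrium_active_prefix.
  have -> : k%:R * p - cum_cost c k = \sum_(1 <= i < k.+1) (p - c i).
    by rewrite sumrB sumr_const_nat subSS subn0 mulr_natl.
  rewrite mulr_sumr [RHS](big_nat_widen _ _ N.+1) // [RHS]big_mkcond.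
  by apply: eq_bigr => i _ /=; rewrite ltnS.
move/eqP: total; rewrite -subr_eq0 -mulrBr mulf_eq0 gt_eqF //= subr_eq0 => /eqP.
lra.
Qed.

Lemma equilibrium_num_active_ge2 : (2 <= num_active N h)%N.
Proof.
have H_gt0 := equilibrium_total_hash_gt0; have p_gt0 : 0 < p by rewrite divr_gt0.
have gH_ge0 : 0 <= g * H by rewrite mulr_ge0 // ltW.
have := equilibrium_price; rewrite /cum_cost.
case: (num_active N h) => [|[|k]] //=.
- by rewrite big_geq //; lra.
- have := c_gt0 (_ : (1 <= 1 <= N)%N); rewrite ?leqnn ?N_gt0 // => c1_gt0.
  by rewrite big_nat1 subrr mul0r; lra.
Qed.

Lemma equilibrium_num_active : num_active N h = n_active N c r g.
Proof.
have H_gt0 := equilibrium_total_hash_gt0; set k := num_active N h.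
have price : (k%:R - 1) * p = cum_cost c k + g * H := equilibrium_price.
have k_ge2 : (2 <= k)%N := equilibrium_num_active_ge2.
have kN : (k <= N)%N := num_active_le N h.
have rg : r * g = p * (g * H) by field; rewrite gt_eqF.
have gH_ge0 : 0 <= g * H by rewrite mulr_ge0 // ltW.
have k1_gt0 : 0 < k%:R - 1 :> R by rewrite subr_gt0 ltr1n.
apply/esym/n_active_eq; first by rewrite k_ge2 kN.
- have kN' : (1 <= k <= N)%N by rewrite kN (ltnW k_ge2).
  have ck_lt : c k < p by rewrite equilibrium_active_prefix.
  have ck_gt0 := c_gt0 kN'.
  rewrite active_condE // rg -subr_lt0 opprD addrA (price_factor _ price).
  rewrite pmulr_llt0 ?subr_lt0 //.
  by have := mulr_gt0 k1_gt0 ck_gt0; lra.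
- move=> n /andP[kn nN]; have nN' : (1 <= n <= N)%N by rewrite nN (leq_trans _ kn).
  have cn_ge : p <= c n by rewrite leNgt equilibrium_active_prefix // -ltnNge.
  have cn_gt0 := c_gt0 nN'.
  have C_le : cum_cost c n <= cum_cost c k + (n - k)%:R * c n.
    apply: cum_cost_le => [|i /andP[ki iN]]; first exact: ltnW.
    by apply: c_le; rewrite ?iN // (leq_trans _ ki).
  rewrite natrB ?(ltnW kn) // in C_le.
  have := ler_wpM2l (ltW cn_gt0) C_le.
  have := price_factor (c n) price.
  have : 0 <= (c n - p) * ((k%:R - 1) * c n + g * H).
    by rewrite mulr_ge0 ?subr_ge0 // addr_ge0 // mulr_ge0 // ltW.
  rewrite active_condE ?(leq_trans k_ge2 (ltnW kn)) // rg -leNgt.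
  lra.
Qed.

End Equilibrium.

Theorem proposition4p4 (R : realType) (N : nat) (c : nat -> R) (r g : R) :
  (2 <= N)%N ->
  (forall i, (1 <= i <= N)%N -> 0 < c i) ->
  (forall i j, (1 <= i)%N -> (i <= j)%N -> (j <= N)%N -> c i <= c j) ->
  0 < r -> 0 <= g ->
  (forall h : nat -> R, is_equilibrium N c r g h ->
      num_active N h = n_active N c r g) /\
  (forall r' : R, r <= r' -> (n_active N c r g <= n_active N c r' g)%N) /\
  (forall g' : R, g <= g' -> (n_active N c r g <= n_active N c r g')%N).
Proof.
move=> N_ge2 c_gt0 c_le r_gt0 g_ge0; split; [|split].
- move=> h eq_h; apply: equilibrium_num_active => //; exact: ltnW.
- move=> r' r_le; apply: n_active_le => n /andP[n_ge2 nN].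
  apply: active_cond_le => //; first by apply: c_gt0; rewrite nN ltnW.
  exact: ler_wpM2r.
- move=> g' g_le; apply: n_active_le => n /andP[n_ge2 nN].
  apply: active_cond_le => //; first by apply: c_gt0; rewrite nN ltnW.
  by rewrite ler_wpM2l // ltW.
Qed.
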